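(* Let $r\ge2$, $n\ge1$, and let $\mathcal D$ be a Desarguesian $(n-1)$-spread of $\mathrm{PG}(rn-1,q)$. For each divisor $k$ of $n$, $\mathcal D$ has a unique Desarguesian $(k-1)$-subspread.
   Context: A $(t-1)$-spread of $\mathrm{PG}(N-1,q)$ is a partition of its point set into $(t-1)$-dimensional subspaces. A Desarguesian $(n-1)$-spread of $\mathrm{PG}(rn-1,q)$ is (up to collineation) the spread obtained by field reduction: viewing $V(r,q^n)$ as an $rn$-dimensional $\mathbb{F}_q$-vector space, each 1-dimensional $\mathbb{F}_{q^n}$-subspace becomes an $n$-dimensional $\mathbb{F}_q$-subspace, i.e. an $(n-1)$-dimensional projective subspace of $\mathrm{PG}(rn-1,q)$. For $k\mid n$, a $(k-1)$-subspread of an $(n-1)$-spread $\mathcal S$ of $\mathrm{PG}(rn-1,q)$ is a $(k-1)$-spread of $\mathrm{PG}(rn-1,q)$ that induces a $(k-1)$-spread in each element of $\mathcal S$. *)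

From HB Require Import structures.
From mathcomp Require Import all_boot all_order all_algebra all_fingroup all_field.
Set Implicit Arguments. Unset Strict Implicit. Unset Printing Implicit Defensive.
Import GRing.Theory.
Local Open Scope ring_scope.

(* PG(N-1,q) is modelled by the F-vector space 'rV[F]_N with #|F| = q;
   a (t-1)-dimensional projective subspace is a t-dimensional vector
   subspace, a point is a nonzero vector (up to scalars). *)

Definition is_spread (F : fieldType) (N t : nat)
    (S : pred {vspace 'rV[F]_N}) : Prop :=
  (forall U, S U -> \dim U = t) /\
  (forall v : 'rV[F]_N, v != 0 -> exists! U, S U /\ v \in U).

Definition is_spread_in (F : fieldType) (N t : nat) (W : {vspace 'rV[F]_N})
    (S : pred {vspace 'rV[F]_N}) : Prop :=
  (forall U, S U -> (U <= W)%VS /\ \dim U = t) /\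
  (forall v : 'rV[F]_N, v \in W -> v != 0 -> exists! U, S U /\ v \in U).

(* Desarguesian (t-1)-spread of PG(N-1,q): there are m with N = m t, a field
   extension L of F of degree t (L = F_{q^t}), and an F-linear bijection
   phi : L^m -> F^N (a collineation after field reduction) such that the
   elements of S are exactly the images of the 1-dimensional L-subspaces
   <x>_L = { c x : c in L }, x <> 0. *)
Definition desarguesian_spread (F : fieldType) (N t : nat)
    (S : pred {vspace 'rV[F]_N}) : Prop :=
  is_spread t S /\
  exists m : nat, N = (m * t)%N /\
  exists L : fieldExtType F, \dim (fullv : {vspace L}) = t /\
  exists phi : {ffun 'I_m -> L} -> 'rV[F]_N,
    linear phi /\ bijective phi /\
    forall U : {vspace 'rV[F]_N},
      S U <-> exists2 x : {ffun 'I_m -> L}, x != 0 &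
                forall v : 'rV[F]_N,
                  v \in U <-> exists c : L, v = phi [ffun i => c * x i].

Definition is_subspread (F : fieldType) (N k : nat)
    (D S : pred {vspace 'rV[F]_N}) : Prop :=
  is_spread k S /\
  forall W, D W -> is_spread_in k W [pred U | S U && (U <= W)%VS].

From HB Require Import structures.
From mathcomp Require Import all_boot all_order all_algebra all_fingroup all_field.
From mathcomp Require Import boolp ring.
Set Implicit Arguments. Unset Strict Implicit. Unset Printing Implicit Defensive.
Import GRing.Theory.
Local Open Scope ring_scope.

(* Write D as the images phi (L x) of the L-lines of L^r, where L = GF(q^n).  A Desarguesian
   subspread S, coming from coordinates psi on K^m with K = GF(q^k), lets every a in K act by
   an additive map that fixes each element of S, hence each element of D (every point of an
   element of D lies on an element of S inside it).  Since r >= 2, an additive map fixing every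
   L-line of L^r is an L-homothety, so S induces a field embedding K -> L.  Its image lies in
   the q^k roots of X^(q^k) - X and has q^k elements, so it does not depend on S: two
   subspreads induce the same homotheties, hence consist of the same lines.  Existence comes
   from restricting the scalars of L^r to the subfield of L of degree k. *)

Lemma linear_add (R : pzRingType) (U V : lmodType R) (f : U -> V) :
  linear f -> {morph f : x y / x + y}.
Proof. by move=> lf x y; have := lf 1 x y; rewrite !scale1r. Qed.

Lemma linear_zero (R : pzRingType) (U V : lmodType R) (f : U -> V) :
  linear f -> f 0 = 0.
Proof. by move=> lf; apply: (addrI (f 0)); rewrite -(linear_add lf) !addr0. Qed.

Lemma linear_inv_add (R : pzRingType) (U V : lmodType R) (f : U -> V) g :
  linear f -> cancel f g -> cancel g f -> {morph g : x y / x + y}.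
Proof. by move=> lf fK gK x y; apply: (can_inj fK); rewrite (linear_add lf) !gK. Qed.

Lemma additive_zero (V W : zmodType) (f : V -> W) :
  {morph f : x y / x + y} -> f 0 = 0.
Proof. by move=> fD; apply: (addrI (f 0)); rewrite -fD !addr0. Qed.

Section ScaledVectors.

Variables (L : fieldType) (m : nat).
Implicit Types (c d : L) (x y : {ffun 'I_m -> L}).

Definition smul c x : {ffun 'I_m -> L} := [ffun i => c * x i].

Lemma smulrA c d x : smul c (smul d x) = smul (c * d) x.
Proof. by apply/ffunP => i; rewrite !ffunE mulrA. Qed.

Lemma smul1r x : smul 1 x = x.
Proof. by apply/ffunP => i; rewrite ffunE mul1r. Qed.

Lemma smul0r x : smul 0 x = 0.
Proof. by apply/ffunP => i; rewrite !ffunE mul0r. Qed.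

Lemma smulr0 c : smul c 0 = 0.
Proof. by apply/ffunP => i; rewrite !ffunE mulr0. Qed.

Lemma smulrDr c x y : smul c (x + y) = smul c x + smul c y.
Proof. by apply/ffunP => i; rewrite !ffunE mulrDr. Qed.

Lemma smulrDl c d x : smul (c + d) x = smul c x + smul d x.
Proof. by apply/ffunP => i; rewrite !ffunE mulrDl. Qed.

Lemma ffun_neq0 x : x != 0 -> exists i, x i != 0.
Proof.
move=> x_neq0; apply/existsP; apply: contraR x_neq0.
by rewrite negb_exists => /forallP x0; apply/eqP/ffunP => i; rewrite ffunE; apply/eqP/negbNE.
Qed.

Lemma smulIl x : x != 0 -> injective (smul ^~ x).
Proof. by move=> /ffun_neq0 [i xi] c d /ffunP /(_ i); rewrite !ffunE; apply: mulIf. Qed.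

Lemma smul_eq0 c x : x != 0 -> smul c x = 0 -> c = 0.
Proof. by move=> x_neq0; rewrite -(smul0r x); apply: smulIl. Qed.

Definition ffun_delta (j : 'I_m) : {ffun 'I_m -> L} := [ffun i => (i == j)%:R].

Lemma ffun_delta_neq0 j : ffun_delta j != 0.
Proof. by apply/eqP => /ffunP /(_ j); rewrite !ffunE eqxx; apply/eqP/oner_neq0. Qed.

End ScaledVectors.

Section LinePreservingMaps.

Variables (L : fieldType) (m : nat) (T : {ffun 'I_m -> L} -> {ffun 'I_m -> L}).
Hypotheses (T_add : {morph T : x y / x + y})
  (T_lines : forall x, x != 0 -> exists a, T x = smul a x).

Lemma eigenvalue_eq x z a b :
  x != 0 -> z != 0 -> ~ (exists c, x = smul c z) ->
  T x = smul a x -> T z = smul b z -> a = b.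
Proof.
move=> x_neq0 z_neq0 xz_indep Tx Tz.
have xz_neq0 : x + z != 0.
  apply: contra_notN xz_indep => /eqP xz0; exists (-1); apply/ffunP => i.
  rewrite ffunE mulN1r; apply/eqP; rewrite -addr_eq0.
  by move/ffunP/(_ i): xz0; rewrite !ffunE => ->.
have [d Txz] := T_lines xz_neq0.
have E i : (d - a) * x i = (b - d) * z i.
  move/ffunP/(_ i): Txz; rewrite T_add Tx Tz !ffunE => Txz_i.
  apply/eqP; rewrite -subr_eq0; apply/eqP.
  by transitivity (d * (x i + z i) - (a * x i + b * z i)); [ring | rewrite Txz_i subrr].
have da : d = a.
  have [//|] := eqVneq d a; rewrite -subr_eq0 => da_neq0; case: xz_indep.
  exists ((b - d) / (d - a)); apply/ffunP => i.
  by rewrite ffunE; apply: (mulfI da_neq0); rewrite E; field.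
have /eqP : b - d = 0.
  apply: (smul_eq0 z_neq0); apply/ffunP => i; rewrite !ffunE -[LHS]E.
  by rewrite da subrr mul0r.
by rewrite subr_eq0 da => /eqP.
Qed.

Lemma line_preserving_homothety : (1 < m)%N -> exists l, forall x, T x = smul l x.
Proof.
move=> m_gt1; pose i0 : 'I_m := Ordinal (ltnW m_gt1); pose i1 : 'I_m := Ordinal m_gt1.
have i01 : i0 != i1 by [].
have e0_neq0 := ffun_delta_neq0 L i0; have e1_neq0 := ffun_delta_neq0 L i1.
have [l Te0] := T_lines e0_neq0; have [l1 Te1] := T_lines e1_neq0.
have l1l : l1 = l.
  apply: (eigenvalue_eq e1_neq0 e0_neq0 _ Te1 Te0) => -[c /ffunP /(_ i1)].
  by rewrite !ffunE eqxx eq_sym (negbTE i01) mulr0 => /eqP; rewrite oner_eq0.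
exists l => x; have [->|x_neq0] := eqVneq x 0; first by rewrite smulr0 (additive_zero T_add).
have [a Tx] := T_lines x_neq0; rewrite Tx; congr smul.
have [[c xc]|x_indep] := pselect (exists c, x = smul c (ffun_delta L i0)); last first.
  exact: eigenvalue_eq x_neq0 e0_neq0 x_indep Tx Te0.
rewrite -l1l; apply: (eigenvalue_eq x_neq0 e1_neq0 _ Tx Te1) => -[c' xc'].
move/ffunP/(_ i0): (etrans (esym xc) xc'); rewrite !ffunE eqxx (negbTE i01) mulr1 mulr0.
by move=> c0; move: x_neq0; rewrite xc c0 smul0r eqxx.
Qed.

End LinePreservingMaps.

Definition image_line (F : fieldType) (L : fieldExtType F) (m N : nat)
    (phi : {ffun 'I_m -> L} -> 'rV[F]_N) (x : {ffun 'I_m -> L})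
    (U : {vspace 'rV[F]_N}) :=
  forall v, v \in U <-> exists c : L, v = phi (smul c x).

Definition line_images (F : fieldType) (L : fieldExtType F) (m N : nat)
    (phi : {ffun 'I_m -> L} -> 'rV[F]_N) (S : pred {vspace 'rV[F]_N}) :=
  forall U, S U <-> exists2 x, x != 0 & image_line phi x U.

Definition homothety (F : fieldType) (L : fieldExtType F) (m N : nat)
    (phi : {ffun 'I_m -> L} -> 'rV[F]_N) (phi_inv : 'rV[F]_N -> {ffun 'I_m -> L})
    (l : L) (v : 'rV[F]_N) :=
  phi (smul l (phi_inv v)).

Section ImageLines.

Variables (F : fieldType) (L : fieldExtType F) (m N : nat).
Variables (phi : {ffun 'I_m -> L} -> 'rV[F]_N) (phi_inv : 'rV[F]_N -> {ffun 'I_m -> L}).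
Hypotheses (phi_lin : linear phi) (phiK : cancel phi phi_inv) (phi_invK : cancel phi_inv phi).

Local Notation hom := (homothety phi phi_inv).

Lemma homothety_image l x : hom l (phi x) = phi (smul l x).
Proof. by rewrite /homothety phiK. Qed.

Lemma homothety1 v : hom 1 v = v.
Proof. by rewrite /homothety smul1r phi_invK. Qed.

Lemma homothetyM l1 l2 v : hom (l1 * l2) v = hom l1 (hom l2 v).
Proof. by rewrite homothety_image smulrA. Qed.

Lemma homothetyDl l1 l2 v : hom (l1 + l2) v = hom l1 v + hom l2 v.
Proof. by rewrite /homothety smulrDl (linear_add phi_lin). Qed.

Lemma homothety_inj l1 l2 : (0 < m)%N -> hom l1 =1 hom l2 -> l1 = l2.
Proof.
move=> m_gt0 /(_ (phi (ffun_delta L (Ordinal m_gt0)))); rewrite !homothety_image.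
by move/(can_inj phiK); apply: smulIl; apply: ffun_delta_neq0.
Qed.

Lemma image_line_uniq x U1 U2 : image_line phi x U1 -> image_line phi x U2 -> U1 = U2.
Proof. by move=> U1x U2x; apply/vspaceP => v; apply/idP/idP => [/U1x/U2x | /U2x/U1x]. Qed.

Lemma image_lineZ c x U :
  c != 0 -> image_line phi x U -> image_line phi (smul c x) U.
Proof.
move=> c_neq0 Ux v; rewrite Ux; split=> -[d ->].
  by exists (d / c); rewrite smulrA mulfVK.
by exists (d * c); rewrite smulrA.
Qed.

Lemma image_line_through x U v :
  image_line phi x U -> v \in U -> v != 0 -> image_line phi (phi_inv v) U.
Proof.
move=> Ux vU v_neq0; have [c vc] := (Ux v).1 vU.
have c_neq0 : c != 0.
  by apply: contra_neq v_neq0 => c0; rewrite vc c0 smul0r (linear_zero phi_lin).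
by rewrite vc phiK; apply: image_lineZ.
Qed.

Lemma linear_eq0 x : (phi x == 0) = (x == 0).
Proof. by rewrite -(inj_eq (can_inj phiK)) (linear_zero phi_lin). Qed.

Lemma exists_image_line x :
  x != 0 -> exists U, image_line phi x U /\ \dim U = \dim {:L}.
Proof.
move=> x_neq0; pose f c := phi (smul c x).
have f_lin : linear f.
  move=> a c d; rewrite /f -phi_lin; congr phi.
  by apply/ffunP => i; rewrite !ffunE mulrDl scalerAl.
pose fL : {linear L -> 'rV[F]_N} := HB.pack f (GRing.isLinear.Build _ _ _ _ f f_lin).
exists (linfun fL @: fullv)%VS; split.
  move=> v; split=> [/memv_imgP [c _ ->] | [c ->]]; first by exists c; rewrite lfunE.
  by apply/memv_imgP; exists c; rewrite ?memvf ?lfunE.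
apply: limg_dim_eq; suff /eqP -> : lker (linfun fL) == 0%VS by rewrite capv0.
by apply/lker0P => c d; rewrite !lfunE => /(can_inj phiK) /(smulIl x_neq0).
Qed.

Lemma line_images_spread S : line_images phi S -> is_spread (\dim {:L}) S.
Proof.
move=> Slines; split=> [U /Slines [x x_neq0 Ux] | v v_neq0].
  have [U' [U'x <-]] := exists_image_line x_neq0.
  by rewrite (image_line_uniq Ux U'x).
have x_neq0 : phi_inv v != 0 by rewrite -linear_eq0 phi_invK.
have [U [Ux _]] := exists_image_line x_neq0.
exists U; split=> [|U' [/Slines [y y_neq0 U'y] vU']].
  by split; [apply/Slines; exists (phi_inv v) | apply/Ux; exists 1; rewrite smul1r].
exact: image_line_uniq Ux (image_line_through U'y vU' v_neq0).
Qed.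

Lemma spread_stabilizer_homothety D (T : 'rV[F]_N -> 'rV[F]_N) :
  line_images phi D -> (1 < m)%N -> {morph T : u w / u + w} ->
  (forall W, D W -> forall v, v \in W -> T v \in W) ->
  exists l, T =1 hom l.
Proof.
move=> D_lines m_gt1 T_add T_stab; pose T' x := phi_inv (T (phi x)).
have T'_add : {morph T' : x y / x + y}.
  by move=> x y; rewrite /T' (linear_add phi_lin) T_add (linear_inv_add phi_lin).
have T'_lines x : x != 0 -> exists a, T' x = smul a x.
  move=> x_neq0; have phix_neq0 : phi x != 0 by rewrite linear_eq0.
  have [W [[DW xW] _]] := (line_images_spread D_lines).2 _ phix_neq0.
  have [y _ Wy] := (D_lines W).1 DW.
  have := image_line_through Wy xW phix_neq0; rewrite phiK => Wx.
  by have [c Txc] := (Wx _).1 (T_stab W DW _ xW); exists c; rewrite /T' Txc phiK.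
have [l T'l] := line_preserving_homothety T'_add T'_lines m_gt1.
by exists l => v; rewrite /homothety -T'l /T' !phi_invK.
Qed.

End ImageLines.

Section SubspreadEmbedding.

Variables (F : fieldType) (L : fieldExtType F) (r N : nat).
Variables (phi : {ffun 'I_r -> L} -> 'rV[F]_N) (phi_inv : 'rV[F]_N -> {ffun 'I_r -> L}).
Hypotheses (phi_lin : linear phi) (phiK : cancel phi phi_inv) (phi_invK : cancel phi_inv phi).
Variable D : pred {vspace 'rV[F]_N}.
Hypotheses (D_lines : line_images phi D) (r_gt1 : (1 < r)%N).

Variables (K : fieldExtType F) (m : nat).
Variables (psi : {ffun 'I_m -> K} -> 'rV[F]_N) (psi_inv : 'rV[F]_N -> {ffun 'I_m -> K}).
Hypotheses (psi_lin : linear psi) (psiK : cancel psi psi_inv) (psi_invK : cancel psi_inv psi).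
Variable S : pred {vspace 'rV[F]_N}.
Hypotheses (S_lines : line_images psi S)
  (S_cover : forall W, D W -> forall v, v \in W -> v != 0 ->
     exists2 U, S U & (U <= W)%VS /\ v \in U).

Lemma subspread_homothety a : exists l, homothety psi psi_inv a =1 homothety phi phi_inv l.
Proof.
have psi_inv_add := linear_inv_add psi_lin psiK psi_invK.
apply: (spread_stabilizer_homothety (T := homothety psi psi_inv a) phi_lin phiK phi_invK
  D_lines r_gt1).
  by move=> u w; rewrite /homothety psi_inv_add smulrDr (linear_add psi_lin).
move=> W DW v vW; have [->|v_neq0] := eqVneq v 0.
  by rewrite /homothety (additive_zero psi_inv_add) smulr0 (linear_zero psi_lin) mem0v.
have [U SU [UW vU]] := S_cover DW vW v_neq0.
have [x _ Ux] := (S_lines U).1 SU; have [c vc] := (Ux v).1 vU.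
by apply: (subvP UW); apply/Ux; exists (a * c); rewrite vc homothety_image // smulrA.
Qed.

Lemma subspread_embedding :
  exists f : {rmorphism K -> L}, forall a, homothety psi psi_inv a =1 homothety phi phi_inv (f a).
Proof.
pose f a := proj1_sig (cid (subspread_homothety a)).
have fP a : homothety psi psi_inv a =1 homothety phi phi_inv (f a).
  exact: proj2_sig (cid (subspread_homothety a)).
have f_eq l1 l2 : homothety phi phi_inv l1 =1 homothety phi phi_inv l2 -> l1 = l2.
  by move=> eq_l; apply: (homothety_inj phiK (ltnW r_gt1) eq_l).
have fD : {morph f : a b / a + b}.
  by move=> a b; apply: f_eq => v; rewrite homothetyDl // -!fP homothetyDl.
have f1 : f 1 = 1 by apply: f_eq => v; rewrite -fP !homothety1.
have fM : {morph f : a b / a * b}.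
  by move=> a b; apply: f_eq => v; rewrite homothetyM // -!fP -homothetyM.
exists (HB.pack_for (GRing.RMorphism.type K L) f
  (GRing.isNmodMorphism.Build K L f (additive_zero fD, fD))
  (GRing.isMonoidMorphism.Build K L f (f1, fM))).
exact: fP.
Qed.

End SubspreadEmbedding.

Lemma rmorph_range_sub (L : fieldType) (K1 K2 : finFieldType)
    (f1 : {rmorphism K1 -> L}) (f2 : {rmorphism K2 -> L}) :
  #|K1| = #|K2| -> forall a2, exists a1, f1 a1 = f2 a2.
Proof.
move=> card_K12 a2; set Q := #|K1|; set p : {poly L} := 'X^Q - 'X.
have root_p (K : finFieldType) (f : {rmorphism K -> L}) a : #|K| = Q -> root p (f a).
  by move=> card_K; rewrite /p rootE !hornerE -card_K -rmorphXn expf_card subrr.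
have size_p : size p = Q.+1.
  by rewrite size_polyDl size_polyXn // size_polyN size_polyX ltnS finNzRing_gt1.
have p_neq0 : p != 0 by rewrite -size_poly_eq0 size_p.
have [//|f2a2_new] := pselect (exists a1, f1 a1 = f2 a2); exfalso.
have roots_uniq : uniq (f2 a2 :: map f1 (enum K1)).
  rewrite /= (map_inj_uniq (fmorph_inj f1)) enum_uniq andbT.
  by apply/mapP => -[a1 _ f1a1]; apply: f2a2_new; exists a1.
have all_roots : all (root p) (f2 a2 :: map f1 (enum K1)).
  by rewrite /= root_p //; apply/allP => _ /mapP [a1 _ ->]; apply: root_p.
by have := max_poly_roots p_neq0 all_roots roots_uniq; rewrite /= size_map -cardE size_p ltnn.
Qed.

Lemma line_images_sub (F : fieldType) (N : nat) (K1 K2 : fieldExtType F) (m1 m2 : nat)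
    (psi1 : {ffun 'I_m1 -> K1} -> 'rV[F]_N) (psi1_inv : 'rV[F]_N -> {ffun 'I_m1 -> K1})
    (psi2 : {ffun 'I_m2 -> K2} -> 'rV[F]_N) (psi2_inv : 'rV[F]_N -> {ffun 'I_m2 -> K2})
    (S1 S2 : pred {vspace 'rV[F]_N}) :
  linear psi1 -> linear psi2 ->
  cancel psi1 psi1_inv -> cancel psi2 psi2_inv -> cancel psi2_inv psi2 ->
  (forall a1, exists a2, homothety psi1 psi1_inv a1 =1 homothety psi2 psi2_inv a2) ->
  (forall a2, exists a1, homothety psi2 psi2_inv a2 =1 homothety psi1 psi1_inv a1) ->
  line_images psi1 S1 -> line_images psi2 S2 -> forall U, S1 U -> S2 U.
Proof.
move=> psi1_lin psi2_lin psi1K psi2K psi2_invK hom12 hom21 S1_lines S2_lines U.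
move=> /S1_lines [x1 x1_neq0 Ux1]; apply/S2_lines; exists (psi2_inv (psi1 x1)).
  by rewrite -(linear_eq0 psi2_lin psi2K) psi2_invK (linear_eq0 psi1_lin psi1K).
move=> v; rewrite Ux1; split=> -[c ->].
  by have [c2 hom_c] := hom12 c; exists c2; rewrite -(homothety_image psi1K) hom_c.
by have [c1 hom_c] := hom21 c; exists c1; rewrite -(homothety_image psi1K) -hom_c.
Qed.

Lemma card_finvect (F : finFieldType) (K : fieldExtType F) :
  #|finvect_type K| = (#|F| ^ \dim {:K})%N.
Proof.
rewrite -(card_vspace (fullv : {vspace finvect_type K})).
by apply: eq_card => x; rewrite memvf.
Qed.

Lemma subspread_cover (F : fieldType) (N k : nat) (D S : pred {vspace 'rV[F]_N}) :
  is_subspread k D S -> forall W, D W -> forall v, v \in W -> v != 0 ->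
    exists2 U, S U & (U <= W)%VS /\ v \in U.
Proof.
move=> [_ S_in_D] W DW v vW v_neq0.
by have [U [[/andP [SU UW] vU] _]] := (S_in_D W DW).2 v vW v_neq0; exists U.
Qed.

Lemma desarguesian_subspread_sub (F : finFieldType) (L : fieldExtType F) (r N k : nat)
    (phi : {ffun 'I_r -> L} -> 'rV[F]_N) (phi_inv : 'rV[F]_N -> {ffun 'I_r -> L})
    (D S1 S2 : pred {vspace 'rV[F]_N}) :
  linear phi -> cancel phi phi_inv -> cancel phi_inv phi ->
  line_images phi D -> (1 < r)%N ->
  desarguesian_spread k S1 -> is_subspread k D S1 ->
  desarguesian_spread k S2 -> is_subspread k D S2 ->
  forall U, S1 U -> S2 U.
Proof.
move=> phi_lin phiK phi_invK D_lines r_gt1.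
move=> [_ [m1 [_ [K1 [dimK1 [psi1 [psi1_lin [[psi1_inv psi1K psi1_invK] S1_lines]]]]]]]] S1_sub.
move=> [_ [m2 [_ [K2 [dimK2 [psi2 [psi2_lin [[psi2_inv psi2K psi2_invK] S2_lines]]]]]]]] S2_sub.
have [f1 hom1] := subspread_embedding phi_lin phiK phi_invK D_lines r_gt1
  psi1_lin psi1K psi1_invK S1_lines (subspread_cover S1_sub).
have [f2 hom2] := subspread_embedding phi_lin phiK phi_invK D_lines r_gt1
  psi2_lin psi2K psi2_invK S2_lines (subspread_cover S2_sub).
have card_K12 : #|finvect_type K1| = #|finvect_type K2| by rewrite !card_finvect dimK1 dimK2.
pose g1 : {rmorphism finvect_type K1 -> L} := f1.
pose g2 : {rmorphism finvect_type K2 -> L} := f2.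
apply: (line_images_sub psi1_lin psi2_lin psi1K psi2K psi2_invK _ _ S1_lines S2_lines).
  move=> a1; have [a2 f21] := rmorph_range_sub g2 g1 (esym card_K12) a1.
  by exists a2 => v; rewrite hom1 -f21 -hom2.
move=> a2; have [a1 f12] := rmorph_range_sub g1 g2 card_K12 a2.
by exists a1 => v; rewrite hom2 -f12 -hom1.
Qed.

Lemma exists_subfield (F : finFieldType) (L : fieldExtType F) (k : nat) :
  (k %| \dim {:L})%N -> exists K : {subfield L}, \dim K = k.
Proof.
move=> k_dvd; pose gL := FinSplittingFieldType F L.
have n_gt0 : (0 < \dim {:L})%N := adim_gt0 (aspacef L).
have divn_divK p : (p %| \dim {:L})%N -> (\dim {:L} %/ (\dim {:L} %/ p))%N = p.
  by move=> p_dvd; rewrite divnA // mulKn.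
have [alpha /eqP gal_alpha _] := finField_galois_generator (sub1v (fullv : {vspace gL})).
have o_alpha : #[alpha]%g = \dim {:L}.
  by rewrite orderE -gal_alpha -galois_dim ?finField_galois ?sub1v // dimv1 divn1.
pose H := <[(alpha ^+ k)%g]>%G.
exists (fixedField_aspace (H : {set _}) : {subfield L}).
have := dim_fixedField H; rewrite /= -orderE cyclic.orderXdiv o_alpha // => dimH.
by rewrite -[RHS](divn_divK _ k_dvd) dimH divn_divK // field_dimS ?subvf.
Qed.

Section RestrictScalars.

Variables (F : fieldType) (L : fieldExtType F) (K : {subfield L}) (r : nat).
Local Notation LK := {ffun 'I_r -> fieldOver K}.
Local Notation M := (\dim {: LK}).
Local Notation e := (vbasis (fullv : {vspace LK})).

Definition restrict_scalars (y : {ffun 'I_M -> subvs_of K}) : {ffun 'I_r -> L} :=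
  \sum_i y i *: e`_i : LK.

Definition restrict_scalars_inv (x : {ffun 'I_r -> L}) : {ffun 'I_M -> subvs_of K} :=
  [ffun i => coord e i (x : LK)].

Lemma restrict_scalarsK : cancel restrict_scalars restrict_scalars_inv.
Proof.
by move=> y; apply/ffunP => i; rewrite ffunE coord_sum_free // (basis_free (vbasisP _)).
Qed.

Lemma restrict_scalars_invK : cancel restrict_scalars_inv restrict_scalars.
Proof.
move=> x; rewrite [RHS](coord_vbasis (memvf (x : LK))).
by apply: eq_bigr => i _; rewrite ffunE.
Qed.

Lemma fieldOver_ffun_scaleE c (x : LK) : c *: x = smul (vsval c) x.
Proof. by apply/ffunP => i; rewrite !ffunE fieldOver_scaleE. Qed.

Lemma restrict_scalarsZ c y :
  restrict_scalars (smul c y) = smul (vsval c) (restrict_scalars y).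
Proof.
rewrite /restrict_scalars -fieldOver_ffun_scaleE scaler_sumr.
by apply: eq_bigr => i _; rewrite ffunE scalerA.
Qed.

Lemma restrict_scalarsD y z :
  restrict_scalars (y + z) = restrict_scalars y + restrict_scalars z.
Proof. by rewrite /restrict_scalars -big_split; apply: eq_bigr => i _; rewrite ffunE scalerDl. Qed.

Lemma restrict_scalars_lin : linear restrict_scalars.
Proof.
move=> a y z; rewrite restrict_scalarsD; congr (_ + _).
have -> : a *: y = smul (a%:A) y by apply/ffunP => i; rewrite !ffunE mulr_algl.
rewrite restrict_scalarsZ linearZ /= algid1; apply/ffunP => i; rewrite !ffunE; exact: mulr_algl.
Qed.

Lemma dim_restrict_scalars : M = (r * (\dim {:L} %/ \dim K))%N.
Proof.
rewrite dimvf; change ((#|'I_r| * dim (fieldOver K))%N = (r * (\dim {:L} %/ \dim K))%N).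
rewrite card_ord -dimvf -dim_aspaceOver ?subvf //; congr (_ * \dim _)%N.
by apply/vspaceP => x; rewrite memvf mem_aspaceOver ?subvf // (memvf (x : L)).
Qed.

End RestrictScalars.

Lemma desarguesian_subspread_exists (F : finFieldType) (L : fieldExtType F) (m n N k : nat)
    (phi : {ffun 'I_m -> L} -> 'rV[F]_N) (phi_inv : 'rV[F]_N -> {ffun 'I_m -> L})
    (D : pred {vspace 'rV[F]_N}) :
  N = (m * n)%N -> \dim {:L} = n -> (k %| n)%N ->
  linear phi -> cancel phi phi_inv -> cancel phi_inv phi -> line_images phi D ->
  exists S, desarguesian_spread k S /\ is_subspread k D S.
Proof.
move=> N_eq dimL k_dvd phi_lin phiK phi_invK D_lines.
have [K dimK] : exists K : {subfield L}, \dim K = k by apply: exists_subfield; rewrite dimL.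
pose psi (y : {ffun 'I_(\dim {: {ffun 'I_m -> fieldOver K}}) -> subvs_of K}) :=
  phi (restrict_scalars y).
pose psi_inv v := @restrict_scalars_inv _ _ K m (phi_inv v).
have psi_lin : linear psi by move=> a y z; rewrite /psi restrict_scalars_lin phi_lin.
have psiK : cancel psi psi_inv by move=> y; rewrite /psi /psi_inv phiK restrict_scalarsK.
have psi_invK : cancel psi_inv psi by move=> v; rewrite /psi /psi_inv restrict_scalars_invK.
pose S := [pred U | `[< exists2 y, y != 0 & image_line psi y U >]].
have S_lines : line_images psi S by move=> U; apply: iff_sym (rwP (asboolP _)).
have S_spread : is_spread k S.
  have dim_subvsK : \dim {: subvs_of K} = k by rewrite dimvf.
  by rewrite -dim_subvsK; exact: (line_images_spread psi_lin psiK psi_invK S_lines).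
have S_sub_D W U v : D W -> S U -> v \in W -> v \in U -> v != 0 -> (U <= W)%VS.
  move=> DW SU vW vU v_neq0.
  have [x _ Wx] := (D_lines W).1 DW; have Wv := image_line_through phi_lin phiK Wx vW v_neq0.
  have [y _ Uy] := (S_lines U).1 SU; have Uv := image_line_through psi_lin psiK Uy vU v_neq0.
  apply/subvP => u /Uv [c ->]; apply/Wv; exists (vsval c).
  by rewrite /psi /psi_inv restrict_scalarsZ restrict_scalars_invK.
exists S; split.
  split=> //; exists (\dim {: {ffun 'I_m -> fieldOver K}}); split.
    by rewrite dim_restrict_scalars N_eq dimL dimK -mulnA divnK.
  exists (subvs_of K); split; first by rewrite dimvf.
  by exists psi; split=> //; split; [exact: Bijective psiK psi_invK | exact: S_lines].
split=> // W DW; split=> [U /andP [SU UW] | v vW v_neq0]; first by rewrite UW (S_spread.1 U SU).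
have [U [[SU vU] U_uniq]] := S_spread.2 v v_neq0.
exists U; split=> [|U' [/andP [SU' _] vU']]; last exact: U_uniq.
by rewrite inE SU (S_sub_D W U v).
Qed.

Theorem corollary2p11 (F : finFieldType) (r n : nat)
    (D : pred {vspace 'rV[F]_(r * n)}) :
  (2 <= r)%N -> (1 <= n)%N ->
  desarguesian_spread n D ->
  forall k : nat, (k %| n)%N ->
    (exists S : pred {vspace 'rV[F]_(r * n)},
        desarguesian_spread k S /\ is_subspread k D S) /\
    (forall S1 S2 : pred {vspace 'rV[F]_(r * n)},
        desarguesian_spread k S1 -> is_subspread k D S1 ->
        desarguesian_spread k S2 -> is_subspread k D S2 ->
        S1 =i S2).
Proof.
move=> r_gt1 n_gt0 [_ [m [N_eq [L [dimL [phi [phi_lin [[phi_inv phiK phi_invK] D_lines]]]]]]]].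
have m_gt1 : (1 < m)%N by move/eqP: N_eq; rewrite eqn_pmul2r // => /eqP <-.
move=> k k_dvd; split.
  exact: desarguesian_subspread_exists N_eq dimL k_dvd phi_lin phiK phi_invK D_lines.
have subspread_sub := desarguesian_subspread_sub phi_lin phiK phi_invK D_lines m_gt1.
move=> S1 S2 S1_des S1_sub S2_des S2_sub U; apply/idP/idP.
  exact: subspread_sub S1_des S1_sub S2_des S2_sub U.
exact: subspread_sub S2_des S2_sub S1_des S1_sub U.
Qed.
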